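(* Let $(X,d)$ be a complete Busemann convex geodesic metric space which is uniformly convex with a modulus of uniform convexity $\delta_X$ that is monotone or lower semicontinuous from the right. Let $(A,B)$ be a closed convex pair of subsets of $X$ with $B$ bounded, and let $T:A\cup B\to A\cup B$ be a noncyclic relatively nonexpansive mapping. Let $$A_0=\{x\in A : d(x,y')=\operatorname{dist}(A,B)\text{ for some } y'\in B\},$$ let $x_0\in A_0$ and define $x_{n+1}=\tfrac{x_n+Tx_n}{2}$ (the midpoint of $x_n$ and $Tx_n$) for every $n\ge 0$. Then $\lim_{n\to\infty} d(x_n,Tx_n)=0$. Moreover, if $T(A)\subseteq C$ for some compact set $C\subseteq X$, then $\{x_n\}$ converges to a fixed point of $T$.
   Context: $\operatorname{dist}(A,B)=\inf\{d(x,y):x\in A,y\in B\}$. A geodesic space is one in which any two points are joined by a geodesic segment; a subset is convex if it contains every geodesic segment joining two of its points. $X$ is Busemann convex if for any geodesics $c_1:[0,l_1]\to X$, $c_2:[0,l_2]\to X$, $d(c_1(tl_1),c_2(tl_2))\le (1-t)d(c_1(0),c_2(0))+t\,d(c_1(l_1),c_2(l_2))$ for all $t\in[0,1]$; such spaces are uniquely geodesic, so the midpoint $\tfrac{x+y}{2}$ (the point $m$ with $d(x,m)=d(m,y)=d(x,y)/2$) is unique. $X$ is uniformly convex if for every $r>0$ and $\varepsilon\in(0,2]$ there is $\delta\in(0,1]$ such that for all $a,x,y$ with $d(x,a)\le r$, $d(y,a)\le r$, $d(x,y)\ge\varepsilon r$, the midpoint $m$ of $x,y$ satisfies $d(m,a)\le(1-\delta)r$;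 a function $\delta_X(r,\varepsilon)$ providing such $\delta$ is a modulus of uniform convexity; it is monotone if it is decreasing in $r$ for each fixed $\varepsilon$, and lower semicontinuous from the right if it is lower semicontinuous from the right in $r$ for each fixed $\varepsilon$. $T$ is relatively nonexpansive if $d(Tx,Ty)\le d(x,y)$ for all $x\in A$, $y\in B$, and noncyclic if $T(A)\subseteq A$, $T(B)\subseteq B$. *)

From Stdlib Require Import Reals.
Open Scope R_scope.

Section MetricDefs.
Context {X : Type} (d : X -> X -> R).

Definition is_metric : Prop :=
  (forall x y, 0 <= d x y) /\ (forall x y, d x y = 0 <-> x = y) /\
  (forall x y, d x y = d y x) /\ (forall x y z, d x z <= d x y + d y z).

Definition is_geodesic (c : R -> X) (l : R) : Prop :=
  0 <= l /\
  forall s t, 0 <= s <= l -> 0 <= t <= l -> d (c s) (c t) = Rabs (s - t).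

Definition geodesic_space : Prop :=
  forall x y, exists c, is_geodesic c (d x y) /\ c 0 = x /\ c (d x y) = y.

Definition convex_set (A : X -> Prop) : Prop :=
  forall x y (c : R -> X) l, A x -> A y -> is_geodesic c l -> c 0 = x -> c l = y ->
    forall t, 0 <= t <= l -> A (c t).

Definition busemann_convex : Prop :=
  forall (c1 c2 : R -> X) l1 l2, is_geodesic c1 l1 -> is_geodesic c2 l2 ->
    forall t, 0 <= t <= 1 ->
      d (c1 (t * l1)) (c2 (t * l2)) <= (1 - t) * d (c1 0) (c2 0) + t * d (c1 l1) (c2 l2).

Definition is_midpoint (x y m : X) : Prop :=
  d x m = d x y / 2 /\ d m y = d x y / 2.

Definition modulus_uc (delta : R -> R -> R) : Prop :=
  forall r eps, 0 < r -> 0 < eps <= 2 ->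
    0 < delta r eps <= 1 /\
    forall a x y m, d x a <= r -> d y a <= r -> d x y >= eps * r -> is_midpoint x y m ->
      d m a <= (1 - delta r eps) * r.

Definition uniformly_convex : Prop :=
  forall r eps, 0 < r -> 0 < eps <= 2 -> exists delta, 0 < delta <= 1 /\
    forall a x y m, d x a <= r -> d y a <= r -> d x y >= eps * r -> is_midpoint x y m ->
      d m a <= (1 - delta) * r.

Definition modulus_monotone (delta : R -> R -> R) : Prop :=
  forall eps, 0 < eps <= 2 -> forall r1 r2, 0 < r1 -> r1 <= r2 -> delta r2 eps <= delta r1 eps.

Definition modulus_lsc_right (delta : R -> R -> R) : Prop :=
  forall eps, 0 < eps <= 2 -> forall r, 0 < r -> forall eta, 0 < eta ->
    exists gam, 0 < gam /\ forall s, r <= s < r + gam -> delta r eps - eta < delta s eps.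

Definition mcauchy_seq (u : nat -> X) : Prop :=
  forall eps, 0 < eps -> exists N, forall n m, (n >= N)%nat -> (m >= N)%nat -> d (u n) (u m) < eps.

Definition seq_converges_to (u : nat -> X) (p : X) : Prop :=
  forall eps, 0 < eps -> exists N, forall n, (n >= N)%nat -> d (u n) p < eps.

Definition mcomplete : Prop :=
  forall u, mcauchy_seq u -> exists p, seq_converges_to u p.

Definition mopen_set (U : X -> Prop) : Prop :=
  forall x, U x -> exists e, 0 < e /\ forall y, d x y < e -> U y.

Definition mclosed_set (A : X -> Prop) : Prop :=
  mopen_set (fun x => ~ A x).

Definition mbounded_set (A : X -> Prop) : Prop :=
  exists x0 r, forall y, A y -> d x0 y <= r.

Definition mcompact_set (C : X -> Prop) : Prop :=
  forall (I : Type) (U : I -> X -> Prop), (forall i, mopen_set (U i)) ->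
    (forall x, C x -> exists i, U i x) ->
    exists l : list I, forall x, C x -> exists i, List.In i l /\ U i x.

Definition is_dist (A B : X -> Prop) (D : R) : Prop :=
  (forall x y, A x -> B y -> D <= d x y) /\
  (forall D', (forall x y, A x -> B y -> D' <= d x y) -> D' <= D).

Definition A0_set (A B : X -> Prop) (D : R) (x : X) : Prop :=
  A x /\ exists y', B y' /\ d x y' = D.

Definition noncyclic (A B : X -> Prop) (T : X -> X) : Prop :=
  (forall x, A x -> A (T x)) /\ (forall y, B y -> B (T y)).

Definition rel_nonexpansive (A B : X -> Prop) (T : X -> X) : Prop :=
  forall x y, A x -> B y -> d (T x) (T y) <= d x y.

End MetricDefs.

From Stdlib Require Import Reals Lra Lia ClassicalEpsilon.
From Coquelicot Require Import Rbar Lim_seq.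
Open Scope R_scope.

(* Uniform convexity, in the quantitative form [uniform_convexity_gain], makes the midpoint of two
   far-apart points of a ball strictly closer to its centre by a definite amount. Consequently,
   minimising sequences of an asymptotic radius over a closed convex set are Cauchy, so
   asymptotic centres exist and are unique, and the asymptotic centre in [B] of a [T]-orbit is a
   fixed point [q] of [T]. As [x (S n)] is the midpoint of [x n] and [T (x n)], which are both at
   most [d (x n) q] from [q], the distances [d (x n) q] decrease, and at their limit the gain
   forces [d (x n) (T (x n)) -> 0]. Under compactness, a cluster point [p] of [x] lies in [A],
   its nearest point in [B] is fixed by [T] and at distance [dist(A,B)] from [p]; since no
   midpoint of two points of [A] is closer to [B] than [dist(A,B)], [x] converges to [p] and
   [T p = p]. *)

Lemma glb_nonneg_approx (E : R -> Prop) :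
  (exists r, E r) -> (forall r, E r -> 0 <= r) ->
  exists L, 0 <= L /\ (forall r, E r -> L <= r) /\
    (forall eta, 0 < eta -> exists r, E r /\ r < L + eta).
Proof.
  intros [r0 Hr0] Hpos.
  destruct (completeness (fun s => E (- s))) as [m [Hub Hleast]].
  { exists 0. intros s Hs. apply Hpos in Hs. lra. }
  { exists (- r0). now rewrite Ropp_involutive. }
  exists (- m). split; [|split].
  - assert (m <= 0) by (apply Hleast; intros s Hs; apply Hpos in Hs; lra). lra.
  - intros r Hr. assert (- r <= m) by (apply Hub; now rewrite Ropp_involutive). lra.
  - intros eta Heta. apply NNPP. intro Hnone.
    assert (m <= m - eta); [|lra].
    apply Hleast. intros s Hs. apply Rnot_lt_le. intro Hlt.
    apply Hnone. exists (- s). split; [exact Hs | lra].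
Qed.

Section MetricSpace.
Variables (X : Type) (d : X -> X -> R).
Hypothesis d_metric : is_metric d.

Lemma dist_ge0 x y : 0 <= d x y. Proof. apply d_metric. Qed.
Lemma dist_sym x y : d x y = d y x. Proof. apply d_metric. Qed.
Lemma dist_triangle x y z : d x z <= d x y + d y z. Proof. apply d_metric. Qed.
Lemma dist_refl x : d x x = 0. Proof. now apply d_metric. Qed.
Lemma dist_eq0 x y : d x y = 0 -> x = y. Proof. apply d_metric. Qed.

Lemma mclosed_adherent (W : X -> Prop) (p : X) : mclosed_set d W ->
  (forall e, 0 < e -> exists y, W y /\ d y p < e) -> W p.
Proof.
  intros HW Hp. apply NNPP. intro Wp. destruct (HW p Wp) as [e [He Hball]].
  destruct (Hp e He) as [y [Wy Hy]].
  apply (Hball y); [rewrite dist_sym; exact Hy | exact Wy].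
Qed.

(* If no point were a cluster point, the balls eventually avoided by [u] would cover [C], and a
   finite subcover would eventually be avoided by all of them at once. *)
Lemma mcompact_cluster_point (C : X -> Prop) (u : nat -> X) :
  mcompact_set d C -> (forall n, C (u n)) ->
  exists c, forall eps, 0 < eps -> forall N, exists n, (N <= n)%nat /\ d (u n) c < eps.
Proof.
  intros Hcomp HC. apply NNPP. intro Hnone.
  assert (Hfar : forall c, exists e N, 0 < e /\ forall n, (N <= n)%nat -> e <= d (u n) c).
  { intro c. apply NNPP. intro Hnear. apply Hnone. exists c. intros eps Heps N.
    apply NNPP. intro Hfar. apply Hnear. exists eps, N. split; [exact Heps|].
    intros n Hn. apply Rnot_lt_le. intro Hlt. apply Hfar. eauto. }
  set (I := {p : X * R * nat | 0 < snd (fst p) /\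
              forall n, (snd p <= n)%nat -> snd (fst p) <= d (u n) (fst (fst p))}).
  set (U := fun (i : I) (y : X) => d (fst (fst (proj1_sig i))) y < snd (fst (proj1_sig i))).
  destruct (Hcomp I U) as [l Hl].
  - intros i y Hy. unfold U in *.
    exists (snd (fst (proj1_sig i)) - d (fst (fst (proj1_sig i))) y). split; [lra|].
    intros z Hz. pose proof (dist_triangle (fst (fst (proj1_sig i))) y z). lra.
  - intros y Cy. destruct (Hfar y) as [e [N [He HN]]].
    exists (exist _ (y, e, N) (conj He HN)). unfold U; simpl. rewrite dist_refl. exact He.
  - assert (HM : exists M, forall i, List.In i l -> (snd (proj1_sig i) <= M)%nat).
    { clear Hl. induction l as [|i l IH]; [exists 0%nat; intros i []|].
      destruct IH as [M HM]. exists (max M (snd (proj1_sig i))).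
      intros j [<-|Hj]; [lia|]. specialize (HM j Hj). lia. }
    destruct HM as [M HM].
    destruct (Hl (u M) (HC M)) as [i [Hi HU]].
    specialize (HM _ Hi). clear Hi.
    destruct i as [[[c e] N] [He HN]]. unfold U in HU; simpl in *.
    specialize (HN M HM). rewrite dist_sym in HN. lra.
Qed.

Variable delta : R -> R -> R.
Hypothesis geodesic : geodesic_space d.
Hypothesis uc : modulus_uc d delta.
Hypothesis busemann : busemann_convex d.
Hypothesis delta_regular : modulus_monotone delta \/ modulus_lsc_right delta.

Lemma geodesic_midpoint (a b : X) :
  exists c, is_geodesic d c (d a b) /\ c 0 = a /\ c (d a b) = b /\
    is_midpoint d a b (c (d a b / 2)).
Proof.
  destruct (geodesic a b) as [c [[Hl Hc] [Hc0 HcL]]].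
  exists c. repeat split; auto.
  - rewrite <- Hc0 at 1. rewrite Hc by lra. rewrite Rabs_left1; lra.
  - rewrite <- HcL at 2. rewrite Hc by lra. rewrite Rabs_left1; lra.
Qed.

Lemma midpoint_exists (a b : X) : exists m, is_midpoint d a b m.
Proof. destruct (geodesic_midpoint a b) as [c [_ [_ [_ Hm]]]]. eauto. Qed.

(* Two distinct midpoints m, m' of a, b would have a midpoint strictly closer to both a and b
   than d a b / 2. *)
Lemma midpoint_unique (a b m m' : X) :
  is_midpoint d a b m -> is_midpoint d a b m' -> m = m'.
Proof.
  intros [Ham Hmb] [Ham' Hm'b].
  destruct (Req_dec (d a b) 0) as [Hab|Hab].
  { apply dist_eq0 in Hab; subst b. rewrite dist_refl in *.
    transitivity a; [symmetry|]; apply dist_eq0; lra. }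
  apply dist_eq0, Rle_antisym; [|apply dist_ge0]. apply Rnot_lt_le. intro Hmm'.
  set (r := d a b / 2).
  assert (Hr : 0 < r) by (pose proof (dist_ge0 a b); unfold r; lra).
  assert (Hle : d m m' <= 2 * r).
  { pose proof (dist_triangle m a m'). rewrite (dist_sym m a) in *. unfold r in *. lra. }
  set (e := d m m' / r).
  assert (He : 0 < e <= 2).
  { unfold e. split; [apply Rdiv_lt_0_compat; lra|].
    apply Rmult_le_reg_r with r; [lra|]. unfold Rdiv. rewrite Rmult_assoc, Rinv_l; lra. }
  assert (Her : e * r = d m m') by (unfold e; field; lra).
  destruct (midpoint_exists m m') as [c Hc].
  destruct (uc r e Hr He) as [[Hdel _] Hgain].
  assert (Hca : d c a <= (1 - delta r e) * r).
  { apply (Hgain a m m' c); [rewrite dist_sym, Ham | rewrite dist_sym, Ham' | lra | exact Hc];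
      unfold r; lra. }
  assert (Hcb : d c b <= (1 - delta r e) * r).
  { apply (Hgain b m m' c); [rewrite Hmb | rewrite Hm'b | lra | exact Hc]; unfold r; lra. }
  pose proof (dist_triangle a c b). rewrite (dist_sym a c) in *.
  assert (d a b = 2 * r) by (unfold r; lra). nra.
Qed.

Lemma convex_midpoint (W : X -> Prop) a b m : convex_set d W -> W a -> W b ->
  is_midpoint d a b m -> W m.
Proof.
  intros HW Wa Wb Hm.
  destruct (geodesic_midpoint a b) as [c [Hc [Hc0 [HcL Hcm]]]].
  rewrite (midpoint_unique _ _ _ _ Hm Hcm).
  apply (HW a b c (d a b)); auto. pose proof (dist_ge0 a b). lra.
Qed.

Lemma midpoint_busemann a b m a' b' m' : is_midpoint d a b m -> is_midpoint d a' b' m' ->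
  d m m' <= / 2 * d a a' + / 2 * d b b'.
Proof.
  intros Hm Hm'.
  destruct (geodesic_midpoint a b) as [c1 [G1 [G10 [G1L G1m]]]].
  destruct (geodesic_midpoint a' b') as [c2 [G2 [G20 [G2L G2m]]]].
  pose proof (busemann c1 c2 (d a b) (d a' b') G1 G2 (/ 2) ltac:(lra)) as Hb.
  rewrite (midpoint_unique _ _ _ _ Hm G1m), (midpoint_unique _ _ _ _ Hm' G2m).
  rewrite G10, G20, G1L, G2L in Hb.
  replace (d a b / 2) with (/ 2 * d a b) by lra.
  replace (d a' b' / 2) with (/ 2 * d a' b') by lra.
  replace (1 - / 2) with (/ 2) in Hb by lra. exact Hb.
Qed.

Lemma midpoint_dist_le a b m q : is_midpoint d a b m -> d m q <= / 2 * d a q + / 2 * d b q.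
Proof.
  intro Hm. apply (midpoint_busemann a b m q q q Hm). split; rewrite dist_refl; lra.
Qed.

Lemma modulus_bounded_below_right R0 e : 0 < R0 -> 0 < e <= 2 ->
  exists d0 gam, 0 < d0 /\ 0 < gam /\ forall s, R0 <= s <= R0 + gam -> d0 <= delta s e.
Proof.
  intros HR He. destruct delta_regular as [Hmon | Hlsc].
  - destruct (uc (R0 + 1) e ltac:(lra) He) as [[Hd _] _].
    exists (delta (R0 + 1) e), 1. split; [exact Hd | split; [lra|]].
    intros s Hs. apply Hmon; [exact He | lra | lra].
  - destruct (uc R0 e HR He) as [[Hd _] _].
    destruct (Hlsc e He R0 HR (delta R0 e / 2) ltac:(lra)) as [gam [Hgam Hs]].
    exists (delta R0 e / 2), (gam / 2). split; [lra | split; [lra|]].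
    intros s Hs'. specialize (Hs s ltac:(lra)). lra.
Qed.

(* For [R0 = 0] the hypotheses are contradictory as soon as [2 * eta < eps]. *)
Lemma uniform_convexity_gain R0 eps : 0 <= R0 -> 0 < eps ->
  exists eta kappa, 0 < eta /\ 0 < kappa /\
    forall a x y m, d x a <= R0 + eta -> d y a <= R0 + eta -> eps <= d x y ->
      is_midpoint d x y m -> d m a <= R0 - kappa.
Proof.
  intros HR0 Heps. destruct (Rle_lt_or_eq_dec 0 R0 HR0) as [HR | <-].
  2: { exists (eps / 3), 1. split; [lra | split; [lra|]].
       intros a x y m Hx Hy Hxy _. pose proof (dist_triangle x a y).
       rewrite (dist_sym a y) in *. lra. }
  set (e := Rmin (eps / (R0 + 1)) 2).
  assert (He : 0 < e <= 2).
  { unfold e. split; [apply Rmin_glb_lt; [apply Rdiv_lt_0_compat|]; lra | apply Rmin_r]. }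
  assert (Hee : e * (R0 + 1) <= eps).
  { apply Rle_trans with (eps / (R0 + 1) * (R0 + 1)); [|right; field; lra].
    apply Rmult_le_compat_r; [lra | apply Rmin_l]. }
  destruct (modulus_bounded_below_right R0 e HR He) as [d0 [gam [Hd0 [Hgam Hdel]]]].
  set (eta := Rmin 1 (Rmin gam (d0 * R0 / 2))).
  assert (Heta : 0 < eta) by (unfold eta; repeat apply Rmin_glb_lt; nra).
  assert (Heta1 : eta <= 1) by apply Rmin_l.
  assert (Heta2 : eta <= gam) by (eapply Rle_trans; [apply Rmin_r | apply Rmin_l]).
  assert (Heta3 : eta <= d0 * R0 / 2) by (eapply Rle_trans; [apply Rmin_r | apply Rmin_r]).
  exists eta, (d0 * R0 / 2). split; [exact Heta | split; [nra|]].
  intros a x y m Hx Hy Hxy Hm.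
  destruct (uc (R0 + eta) e ltac:(lra) He) as [_ Hgain].
  specialize (Hdel (R0 + eta) ltac:(lra)).
  pose proof (Hgain a x y m Hx Hy ltac:(nra) Hm). nra.
Qed.

Definition bounded_seq (a : nat -> X) : Prop := exists b K, forall n, d (a n) b <= K.

(* The asymptotic radius [limsup_n d (a n) z], read as 0 when the limsup is infinite
   (which cannot happen for bounded sequences). *)
Definition asym_radius (a : nat -> X) (z : X) : R :=
  real (proj1_sig (ex_LimSup_seq (fun n => d (a n) z))).

Lemma asym_radius_spec a z : bounded_seq a ->
  (forall eta, 0 < eta -> exists N, forall n, (N <= n)%nat -> d (a n) z < asym_radius a z + eta) /\
  (forall eta, 0 < eta -> forall N, exists n, (N <= n)%nat /\ asym_radius a z - eta < d (a n) z).
Proof.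
  intros [b [K HK]]. unfold asym_radius.
  destruct (ex_LimSup_seq (fun n => d (a n) z)) as [[l| |] Hl]; simpl in *.
  - split.
    + intros eta He. apply (Hl (mkposreal eta He)).
    + intros eta He. apply (Hl (mkposreal eta He)).
  - exfalso. destruct (Hl (K + d b z) 0%nat) as [n [_ Hn]].
    pose proof (dist_triangle (a n) b z). pose proof (HK n). lra.
  - exfalso. destruct (Hl 0) as [N HN]. specialize (HN N (le_n N)).
    pose proof (dist_ge0 (a N) z). lra.
Qed.

Lemma asym_radius_ge0 a z : bounded_seq a -> 0 <= asym_radius a z.
Proof.
  intro Hb. destruct (asym_radius_spec a z Hb) as [Hev _].
  apply Rle_plus_epsilon. intros eta He. destruct (Hev eta He) as [N HN].
  specialize (HN N (le_n N)). pose proof (dist_ge0 (a N) z). lra.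
Qed.

Lemma asym_radius_lipschitz a z w : bounded_seq a ->
  asym_radius a z <= asym_radius a w + d z w.
Proof.
  intro Hb. destruct (asym_radius_spec a z Hb) as [_ Hfreq].
  destruct (asym_radius_spec a w Hb) as [Hev _].
  apply Rle_plus_epsilon. intros eta He.
  destruct (Hev (eta / 2) ltac:(lra)) as [N HN].
  destruct (Hfreq (eta / 2) ltac:(lra) N) as [n [Hn Hz]].
  specialize (HN n Hn). pose proof (dist_triangle (a n) w z). rewrite (dist_sym w z) in *. lra.
Qed.

Lemma asym_radius_const p z : asym_radius (fun _ => p) z = d p z.
Proof.
  assert (Hb : bounded_seq (fun _ => p)) by (exists p, 0; intro; rewrite dist_refl; lra).
  destruct (asym_radius_spec _ z Hb) as [Hev Hfreq].
  apply Rle_antisym; apply Rle_plus_epsilon; intros eta He.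
  - destruct (Hfreq eta He 0%nat) as [n [_ Hn]]. lra.
  - destruct (Hev eta He) as [N HN]. specialize (HN N (le_n N)). lra.
Qed.

(* Otherwise their midpoint would have an asymptotic radius below the infimum [L]. *)
Lemma asym_radius_sublevel_small a (W : X -> Prop) L : bounded_seq a -> convex_set d W ->
  0 <= L -> (forall w, W w -> L <= asym_radius a w) ->
  forall eps, 0 < eps -> exists eta, 0 < eta /\ forall w1 w2, W w1 -> W w2 ->
    asym_radius a w1 < L + eta -> asym_radius a w2 < L + eta -> d w1 w2 < eps.
Proof.
  intros Hb HW HL0 HL eps Heps.
  destruct (uniform_convexity_gain L eps HL0 Heps) as [eta [kap [Heta [Hkap Hgain]]]].
  exists (eta / 2). split; [lra|]. intros w1 w2 W1 W2 Hw1 Hw2.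
  apply Rnot_le_lt. intro Hfar.
  destruct (midpoint_exists w1 w2) as [m Hm].
  destruct (asym_radius_spec a w1 Hb) as [Hev1 _].
  destruct (asym_radius_spec a w2 Hb) as [Hev2 _].
  destruct (asym_radius_spec a m Hb) as [_ Hfreq].
  destruct (Hev1 (eta / 2) ltac:(lra)) as [N1 HN1].
  destruct (Hev2 (eta / 2) ltac:(lra)) as [N2 HN2].
  destruct (Hfreq (kap / 2) ltac:(lra) (max N1 N2)) as [n [Hn Hmn]].
  specialize (HN1 n ltac:(lia)). specialize (HN2 n ltac:(lia)).
  assert (d m (a n) <= L - kap).
  { apply (Hgain (a n) w1 w2 m); auto; rewrite dist_sym; lra. }
  specialize (HL m (convex_midpoint W w1 w2 m HW W1 W2 Hm)).
  rewrite dist_sym in Hmn. lra.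
Qed.

Lemma asym_center_exists_unique a (W : X -> Prop) : bounded_seq a -> mcomplete d ->
  mclosed_set d W -> convex_set d W -> (exists s, W s) ->
  exists z, W z /\ (forall w, W w -> asym_radius a z <= asym_radius a w) /\
    (forall w, W w -> asym_radius a w <= asym_radius a z -> w = z).
Proof.
  intros Hb Hcomplete Hclosed HW [s Ws].
  destruct (glb_nonneg_approx (fun r => exists w, W w /\ r = asym_radius a w))
    as [L [HL0 [Hglb Happrox]]].
  { eauto. } { intros r [w [_ ->]]. now apply asym_radius_ge0. }
  assert (HL : forall w, W w -> L <= asym_radius a w) by (intros w Ww; apply Hglb; eauto).
  pose proof (asym_radius_sublevel_small a W L Hb HW HL0 HL) as Hsmall.
  assert (Hmin : forall k, exists w, W w /\ asym_radius a w < L + / INR (S k)).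
  { intro k. destruct (Happrox (/ INR (S k))) as [r [[w [Ww ->]] Hw]]; eauto.
    apply Rinv_0_lt_compat, lt_0_INR. lia. }
  destruct (choice _ Hmin) as [ws Hws].
  assert (Hws_inf : forall eta, 0 < eta ->
            exists N, forall k, (N <= k)%nat -> asym_radius a (ws k) < L + eta).
  { intros eta Heta. destruct (archimed_cor1 eta Heta) as [N [HN HN0]].
    exists N. intros k Hk. destruct (Hws k) as [_ Hk'].
    assert (/ INR (S k) <= / INR N); [|lra].
    apply Rinv_le_contravar; [apply lt_0_INR; lia | apply le_INR; lia]. }
  destruct (Hcomplete ws) as [z Hz].
  { intros eps Heps. destruct (Hsmall eps Heps) as [eta [Heta Hclose]].
    destruct (Hws_inf eta Heta) as [N HN]. exists N. intros n m Hn Hm.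
    apply Hclose; auto; apply Hws. }
  assert (Wz : W z).
  { apply (mclosed_adherent W z Hclosed). intros e He.
    destruct (Hz e He) as [N HN]. exists (ws N). split; [apply Hws | apply HN; lia]. }
  assert (Hz_min : asym_radius a z <= L).
  { apply Rle_plus_epsilon. intros eta He.
    destruct (Hws_inf (eta / 2) ltac:(lra)) as [N1 HN1].
    destruct (Hz (eta / 2) ltac:(lra)) as [N2 HN2].
    pose proof (asym_radius_lipschitz a z (ws (max N1 N2)) Hb).
    specialize (HN1 (max N1 N2) ltac:(lia)). specialize (HN2 (max N1 N2) ltac:(lia)).
    rewrite dist_sym in HN2. lra. }
  exists z. split; [exact Wz | split].
  - intros w Ww. specialize (HL w Ww). lra.
  - intros w Ww Hw. apply dist_eq0, Rle_antisym; [|apply dist_ge0].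
    apply Rle_plus_epsilon. intros eps Heps. rewrite Rplus_0_l.
    destruct (Hsmall eps Heps) as [eta [Heta Hclose]]. left. apply Hclose; auto; lra.
Qed.

Lemma nearest_point_exists_unique (p : X) (W : X -> Prop) : mcomplete d ->
  mclosed_set d W -> convex_set d W -> (exists s, W s) ->
  exists q, W q /\ (forall w, W w -> d p q <= d p w) /\
    (forall w, W w -> d p w <= d p q -> w = q).
Proof.
  intros Hcomplete Hclosed HW Hne.
  assert (Hb : bounded_seq (fun _ => p)) by (exists p, 0; intro; rewrite dist_refl; lra).
  destruct (asym_center_exists_unique _ W Hb Hcomplete Hclosed HW Hne) as [q [Wq [Hmin Huniq]]].
  exists q. split; [exact Wq | split]; intros w Ww; rewrite <- !(asym_radius_const p); auto.
Qed.

(* Since [d (T^(n+1) a0) (T q) <= d (T^n a0) q], the asymptotic radius of the orbit at [T q] is at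
   most its radius at [q], so [T q] is again the (unique) asymptotic centre. *)
Lemma noncyclic_fixed_point_in_B (A B : X -> Prop) (T : X -> X) (a0 : X) :
  mcomplete d -> mclosed_set d B -> convex_set d B -> mbounded_set d B ->
  noncyclic A B T -> rel_nonexpansive d A B T -> A a0 -> (exists b, B b) ->
  exists q, B q /\ T q = q.
Proof.
  intros Hcomplete Bclosed Bconvex [c [r Hr]] [TA TB] Trne Aa0 [b0 Bb0].
  set (orbit := fun n => Nat.iter n T a0).
  assert (orbit_A : forall n, A (orbit n)) by (induction n; simpl; auto).
  assert (iter_B : forall n, B (Nat.iter n T b0)) by (induction n; simpl; auto).
  assert (Hb : bounded_seq orbit).
  { exists c, (d a0 b0 + r). intro n.
    assert (d (orbit n) (Nat.iter n T b0) <= d a0 b0).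
    { induction n as [|n IH]; [simpl; lra|].
      pose proof (Trne _ _ (orbit_A n) (iter_B n)). simpl in *. lra. }
    pose proof (dist_triangle (orbit n) (Nat.iter n T b0) c). pose proof (Hr _ (iter_B n)).
    rewrite (dist_sym c) in *. lra. }
  destruct (asym_center_exists_unique orbit B Hb Hcomplete Bclosed Bconvex (ex_intro _ b0 Bb0))
    as [q [Bq [_ Huniq]]].
  exists q. split; [exact Bq|]. apply Huniq; [apply TB, Bq|].
  destruct (asym_radius_spec orbit (T q) Hb) as [_ Hfreq].
  destruct (asym_radius_spec orbit q Hb) as [Hev _].
  apply Rle_plus_epsilon. intros eta He.
  destruct (Hev (eta / 2) ltac:(lra)) as [N HN].
  destruct (Hfreq (eta / 2) ltac:(lra) (S N)) as [[|n] [Hn Hlt]]; [lia|].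
  specialize (HN n ltac:(lia)). pose proof (Trne _ _ (orbit_A n) Bq).
  change (orbit (S n)) with (T (orbit n)) in Hlt. lra.
Qed.

(* Otherwise their midpoint, which lies in [A], would be closer to [q] than [dist(A,B)]. *)
Lemma proximal_points_close (A B : X -> Prop) D : convex_set d A -> is_dist d A B D -> 0 <= D ->
  forall eps, 0 < eps -> exists eta, 0 < eta /\ forall u v q, A u -> A v -> B q ->
    d u q <= D + eta -> d v q <= D + eta -> d u v < eps.
Proof.
  intros Aconvex [Hlow _] HD eps Heps.
  destruct (uniform_convexity_gain D eps HD Heps) as [eta [kap [Heta [Hkap Hgain]]]].
  exists eta. split; [exact Heta|]. intros u v q Au Av Bq Hu Hv.
  apply Rnot_le_lt. intro Hfar. destruct (midpoint_exists u v) as [m Hm].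
  pose proof (Hgain q u v m Hu Hv Hfar Hm).
  pose proof (Hlow m q (convex_midpoint A u v m Aconvex Au Av Hm) Bq). lra.
Qed.

Section Iteration.
Variables (A B : X -> Prop) (T : X -> X) (x : nat -> X).
Hypothesis T_rne : rel_nonexpansive d A B T.
Hypothesis x_mid : forall n, is_midpoint d (x n) (T (x n)) (x (S n)).

Lemma iterates_invariant (W : X -> Prop) : convex_set d W -> (forall a, W a -> W (T a)) ->
  W (x 0%nat) -> forall n, W (x n).
Proof.
  intros HW TW W0 n. induction n as [|n IH]; [exact W0|].
  exact (convex_midpoint W _ _ _ HW IH (TW _ IH) (x_mid n)).
Qed.

Hypothesis x_A : forall n, A (x n).

Lemma iterates_fejer q : B q -> T q = q -> Un_decreasing (fun n => d (x n) q).
Proof.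
  intros Bq Tq n. pose proof (T_rne _ _ (x_A n) Bq) as HT. rewrite Tq in HT.
  pose proof (midpoint_dist_le _ _ _ q (x_mid n)). lra.
Qed.

(* If [d (x n) q] decreases to [L], uniform convexity at radius [L] forbids
   [d (x n) (T (x n)) >= eps] once [d (x n) q < L + eta], since [x (S n)] is their midpoint. *)
Lemma iterates_asymptotically_regular q : B q -> T q = q ->
  Un_cv (fun n => d (x n) (T (x n))) 0.
Proof.
  intros Bq Tq.
  destruct (glb_nonneg_approx (fun r => exists n, r = d (x n) q)) as [L [HL0 [Hglb Happrox]]].
  { exists (d (x 0%nat) q), 0%nat. reflexivity. } { intros r [n ->]. apply dist_ge0. }
  intros eps Heps.
  destruct (uniform_convexity_gain L eps HL0 Heps) as [eta [kap [Heta [Hkap Hgain]]]].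
  destruct (Happrox eta Heta) as [r [[N ->] HN]].
  exists N. intros n Hn. unfold Rdist. rewrite Rminus_0_r, Rabs_pos_eq by apply dist_ge0.
  apply Rnot_le_lt. intro Hfar.
  pose proof (decreasing_prop _ N n (iterates_fejer q Bq Tq) Hn).
  pose proof (T_rne _ _ (x_A n) Bq) as HT. rewrite Tq in HT.
  pose proof (Hgain q (x n) (T (x n)) (x (S n)) ltac:(lra) ltac:(lra) Hfar (x_mid n)).
  specialize (Hglb _ (ex_intro _ (S n) eq_refl)). lra.
Qed.

(* The points [y n] follow the same midpoint iteration in [B], starting from a point proximal
   to [x 0]; Busemann convexity keeps them at distance [D]. *)
Lemma iterates_proximal D : convex_set d B -> (forall b, B b -> B (T b)) -> is_dist d A B D ->
  A0_set d A B D (x 0%nat) -> forall n, exists y, B y /\ d (x n) y = D.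
Proof.
  intros Bconvex TB [Hlow _] [_ Hy0] n. induction n as [|n [y [By Hy]]]; [exact Hy0|].
  destruct (midpoint_exists y (T y)) as [y' Hy'].
  assert (By' : B y') by exact (convex_midpoint B _ _ _ Bconvex By (TB _ By) Hy').
  exists y'. split; [exact By'|].
  pose proof (midpoint_busemann _ _ _ _ _ _ (x_mid n) Hy').
  pose proof (T_rne _ _ (x_A n) By). pose proof (Hlow _ _ (x_A (S n)) By'). lra.
Qed.

Definition defect_cluster_point (p : X) : Prop :=
  forall eps, 0 < eps -> forall N, exists n, (N <= n)%nat /\ d (x n) p < eps /\ d (x n) (T (x n)) < eps.

Lemma defect_cluster_point_exists (C : X -> Prop) : mcompact_set d C ->
  (forall a, A a -> C (T a)) -> Un_cv (fun n => d (x n) (T (x n))) 0 ->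
  exists p, defect_cluster_point p.
Proof.
  intros Ccompact TC Hreg.
  destruct (mcompact_cluster_point C (fun n => T (x n)) Ccompact (fun n => TC _ (x_A n)))
    as [p Hp].
  exists p. intros eps Heps N. destruct (Hreg (eps / 2) ltac:(lra)) as [N1 HN1].
  destruct (Hp (eps / 2) ltac:(lra) (max N N1)) as [n [Hn Hnp]].
  specialize (HN1 n ltac:(lia)). unfold Rdist in HN1.
  rewrite Rminus_0_r, Rabs_pos_eq in HN1 by apply dist_ge0.
  pose proof (dist_triangle (x n) (T (x n)) p). exists n. split; [lia | split; lra].
Qed.

Lemma defect_cluster_nearest_fixed D p q : (forall b, B b -> B (T b)) -> is_dist d A B D ->
  (forall n, exists y, B y /\ d (x n) y = D) -> defect_cluster_point p -> A p -> B q ->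
  (forall w, B w -> d p q <= d p w) -> (forall w, B w -> d p w <= d p q -> w = q) ->
  d p q = D /\ T q = q.
Proof.
  intros TB [Hlow _] Hprox Hp Ap Bq Hnear Huniq.
  assert (Hpq : d p q = D).
  { apply Rle_antisym; [|apply Hlow; assumption].
    apply Rle_plus_epsilon. intros eta He. destruct (Hp eta He 0%nat) as [n [_ [Hn _]]].
    destruct (Hprox n) as [y [By Hy]]. pose proof (Hnear y By).
    pose proof (dist_triangle p (x n) y). rewrite (dist_sym p (x n)) in *. lra. }
  split; [exact Hpq|]. apply Huniq; [apply TB, Bq|].
  apply Rle_plus_epsilon. intros eta He.
  destruct (Hp (eta / 3) ltac:(lra) 0%nat) as [n [_ [Hn Hdef]]].
  pose proof (T_rne _ _ (x_A n) Bq).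
  pose proof (dist_triangle p (x n) (T q)). pose proof (dist_triangle (x n) (T (x n)) (T q)).
  pose proof (dist_triangle (x n) p q). rewrite (dist_sym p (x n)) in *. lra.
Qed.

Lemma defect_cluster_point_limit D p :
  mcomplete d -> mclosed_set d A -> mclosed_set d B -> convex_set d A -> convex_set d B ->
  noncyclic A B T -> is_dist d A B D -> A0_set d A B D (x 0%nat) ->
  defect_cluster_point p -> seq_converges_to d x p /\ A p /\ T p = p.
Proof.
  intros Hcomplete Aclosed Bclosed Aconvex Bconvex [TA TB] Hdist H0 Hp.
  assert (HD : 0 <= D) by (destruct H0 as [_ [y [_ <-]]]; apply dist_ge0).
  assert (Ap : A p).
  { apply (mclosed_adherent A p Aclosed). intros e He.
    destruct (Hp e He 0%nat) as [n [_ [Hn _]]]. exists (x n). auto. }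
  destruct (nearest_point_exists_unique p B Hcomplete Bclosed Bconvex) as [q [Bq [Hnear Huniq]]].
  { destruct H0 as [_ [y [By _]]]. eauto. }
  destruct (defect_cluster_nearest_fixed D p q TB Hdist
              (iterates_proximal D Bconvex TB Hdist H0) Hp Ap Bq Hnear Huniq) as [Hpq Tq].
  pose proof (proximal_points_close A B D Aconvex Hdist HD) as Hclose.
  split; [|split; [exact Ap|]].
  - intros eps Heps. destruct (Hclose eps Heps) as [eta [Heta Hsmall]].
    destruct (Hp eta Heta 0%nat) as [n0 [_ [Hn0 _]]]. exists n0. intros n Hn.
    pose proof (decreasing_prop _ n0 n (iterates_fejer q Bq Tq) Hn).
    pose proof (dist_triangle (x n0) p q).
    apply (Hsmall (x n) p q); auto; lra.
  - symmetry. apply dist_eq0, Rle_antisym; [|apply dist_ge0].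
    apply Rle_plus_epsilon. intros eps Heps. destruct (Hclose eps Heps) as [eta [Heta Hsmall]].
    pose proof (T_rne _ _ Ap Bq) as HT. rewrite Tq in HT.
    pose proof (Hsmall p (T p) q Ap (TA _ Ap) Bq ltac:(lra) ltac:(lra)). lra.
Qed.

End Iteration.
End MetricSpace.

Theorem mainTheorem7 (X : Type) (d : X -> X -> R)
  (delta : R -> R -> R)
  (A B : X -> Prop) (T : X -> X) (D : R) (x : nat -> X) :
  is_metric d -> mcomplete d -> geodesic_space d -> busemann_convex d ->
  modulus_uc d delta -> (modulus_monotone delta \/ modulus_lsc_right delta) ->
  mclosed_set d A -> mclosed_set d B -> convex_set d A -> convex_set d B ->
  mbounded_set d B ->
  noncyclic A B T -> rel_nonexpansive d A B T ->
  is_dist d A B D ->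
  A0_set d A B D (x 0%nat) ->
  (forall n, is_midpoint d (x n) (T (x n)) (x (S n))) ->
  Un_cv (fun n => d (x n) (T (x n))) 0 /\
  ((exists C, mcompact_set d C /\ forall a, A a -> C (T a)) ->
   exists p, seq_converges_to d x p /\ (A p \/ B p) /\ T p = p).
Proof.
  intros Hmetric Hcomplete Hgeo Hbus Huc Hmod Aclosed Bclosed Aconvex Bconvex Bbounded
    Tnc Trne Hdist H0 Hmid.
  pose proof (iterates_invariant _ _ Hmetric _ Hgeo Huc _ _ Hmid A Aconvex (proj1 Tnc) (proj1 H0))
    as xA.
  destruct (noncyclic_fixed_point_in_B _ _ Hmetric _ Hgeo Huc Hmod A B T (x 0%nat)
              Hcomplete Bclosed Bconvex Bbounded Tnc Trne (xA 0%nat)) as [q [Bq Tq]].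
  { destruct H0 as [_ [y [By _]]]. eauto. }
  pose proof (iterates_asymptotically_regular _ _ Hmetric _ Hgeo Huc Hbus Hmod A B T x
                Trne Hmid xA q Bq Tq) as Hregular.
  split; [exact Hregular|]. intros [C [Ccompact TC]].
  destruct (defect_cluster_point_exists _ _ Hmetric A T x xA C Ccompact TC Hregular) as [p Hp].
  destruct (defect_cluster_point_limit _ _ Hmetric _ Hgeo Huc Hbus Hmod A B T x Trne Hmid xA D p
              Hcomplete Aclosed Bclosed Aconvex Bconvex Tnc Hdist H0 Hp) as [Hlim [Ap Tp]].
  exists p. split; [exact Hlim | split; [left; exact Ap | exact Tp]].
Qed.
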